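(* Let $\alpha,\beta$ be integers different from $1$ with $v_2(\alpha-1)=v_2(\beta-1)=1$. Then $|G_2|=16$, the nilpotency class of $G_2$ is $3$, $o(a)=o(b)=o(c)=4$, and $G_2$ is isomorphic to the generalized quaternion group $Q_{16}$ of order $16$.
   Context: $G(\alpha,\beta)=\langle A,B\mid A^{[A,B]}=A^{\alpha},\ B^{[B,A]}=B^{\beta}\rangle$ with $[x,y]=x^{-1}y^{-1}xy$, $y^x=x^{-1}yx$, and $C=[A,B]$. The group $G(\alpha,\beta)$ is finite and nilpotent, hence the direct product of its Sylow subgroups; $G_2$ denotes its Sylow $2$-subgroup and $a,b,c$ denote the images of $A,B,C$ under the canonical projection $G(\alpha,\beta)\to G_2$. $v_2$ is the $2$-adic valuation and $o(x)$ the order of $x$. *)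

From HB Require Import structures.
From mathcomp Require Import all_boot all_order all_algebra all_fingroup all_solvable.
Set Implicit Arguments. Unset Strict Implicit. Unset Printing Implicit Defensive.
Import GRing.Theory Num.Theory.

Definition zexpg (gT : finGroupType) (x : gT) (k : int) : gT :=
  match k with
  | Posz n => (x ^+ n)%g
  | Negz n => (x ^- n.+1)%g
  end.

Definition v2 (z : int) : nat := logn 2 `|z|%N.

(* The defining relations of G(alpha,beta):
   A^[A,B] = A^alpha, B^[B,A] = B^beta.  MathComp's conventions agree with the
   paper: x ^ y = y^-1 x y and [~ x, y] = x^-1 y^-1 x y. *)
Definition Grels (alpha beta : int) (gT : finGroupType) (x y : gT) : Prop :=
  (x ^ [~ x, y])%g = zexpg x alpha /\ (y ^ [~ y, x])%g = zexpg y beta.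

(* (gT, a, b) presents the Sylow 2-subgroup G_2 of G(alpha,beta), with a, b the
   images of A, B: the group <<{a,b}>> is a finite 2-group generated by a, b
   satisfying the relations, and it is universal among such: for every finite
   2-group generated by x, y satisfying the relations there is a homomorphism
   sending a to x and b to y.  (Since G(alpha,beta) is finite nilpotent,
   G_2 = G / O_2'(G) is exactly the largest 2-group quotient of G.) *)
Definition is_G2 (alpha beta : int) (gT : finGroupType) (a b : gT) : Prop :=
  [/\ pgroup 2 <<[set a; b]>>%g,
      Grels alpha beta a b &
      forall (hT : finGroupType) (x y : hT),
        pgroup 2 <<[set x; y]>>%g -> Grels alpha beta x y ->
        exists f : {morphism <<[set a; b]>>%g >-> hT},
          f a = x /\ f b = y].

From HB Require Import structures.
From mathcomp Require Import all_boot all_order all_algebra all_fingroup all_solvable.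
From mathcomp Require Import zify.
Import GRing.Theory Num.Theory.
Set Implicit Arguments. Unset Strict Implicit. Unset Printing Implicit Defensive.

(* Let x, y generate a finite 2-group satisfying the relations, c = [~ x, y].
   As alpha = 3 (mod 4), the first relation reads x ^ c = x^-1 * z with
   z = x ^+ (alpha + 1) a power of x ^+ 4.  By induction on the order through a
   central subgroup of order 2 we may assume x ^+ 4 and y ^+ 4 central; then z is
   a central involution and x ^+ 2 = c ^+ 2 * z commutes with c while c inverts
   it, so x ^+ 4 = 1, and symmetrically y ^+ 4 = 1.  The relations thus become
   x ^ c = x^-1 and y ^ c^-1 = y^-1, which force s = x^-1 * y to satisfy
   s ^+ 8 = 1, x ^+ 2 = s ^+ 4 and s ^ x = s^-1: the group is a quotient of Q_16.
   Conversely v and v * u satisfy the relations in Q_16 = <u, v>, so Q_16 is the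
   largest such group, i.e. G_2. *)

Lemma v2_eq1_modz4 (a : int) : v2 (a - 1)%R = 1%N -> (a %% 4)%Z = 3%R.
Proof.
rewrite /v2 => v2a.
have a1_gt0 : (0 < `|(a - 1)%R|)%N.
  by move: v2a; case: (absz _) => //; rewrite logn0.
have dvd2 : (2 ^ 1 %| `|(a - 1)%R|)%N by rewrite pfactor_dvdn // v2a.
have ndvd4 : ~~ (2 ^ 2 %| `|(a - 1)%R|)%N by rewrite pfactor_dvdn // v2a.
move: dvd2 ndvd4 => /=; lia.
Qed.

Local Open Scope group_scope.

Section IntegerPowers.
Variable gT : finGroupType.
Implicit Types x : gT.

Lemma zexpg_modz x k m : (0 < m)%N -> x ^+ m = 1 -> zexpg x k = x ^+ `|(k %% m)%Z|.
Proof.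
move=> m_gt0 xm; have dvd_m : (#[x] %| m)%N by rewrite order_dvdn xm.
case: k => n /=.
  have -> : `|(n %% m)%Z|%N = (n %% m)%N by lia.
  by rewrite expg_mod.
have : (#[x] %| `|(Negz n %% m)%Z| + n.+1)%N.
  apply: dvdn_trans dvd_m _; apply/dvdnP; exists `|(- (Negz n %/ m)%Z)%R|%N.
  have := divz_eq (Negz n) m; have := modz_ge0 (Negz n) (d := m); nia.
by rewrite order_dvdn expgD => /eqP/mulg1_eq <-; rewrite invgK.
Qed.

Lemma zexpg_3mod4 x k : (k %% 4)%Z = 3%R -> exists2 a, (a %% 4 = 3)%N & zexpg x k = x ^+ a.
Proof.
move=> k3; have m_gt0 : (0 < 4 * #[x])%N by rewrite muln_gt0 order_gt0.
exists `|(k %% (4 * #[x])%N)%Z|%N.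
  have := divz_eq k (4 * #[x])%N; have := modz_ge0 k (d := (4 * #[x])%N); nia.
by apply: zexpg_modz; rewrite // mulnC expgM expg_order expg1n.
Qed.

Lemma zexpg_3mod4_inv x k : x ^+ 4 = 1 -> (k %% 4)%Z = 3%R -> zexpg x k = x^-1.
Proof.
move=> x4 k3; rewrite (zexpg_modz k _ x4) // k3.
by apply: (@mulIg _ x); rewrite mulVg -expgSr.
Qed.

End IntegerPowers.

Lemma morph_zexpg (aT rT : finGroupType) (D : {group aT}) (f : {morphism D >-> rT}) x k :
  x \in D -> f (zexpg x k) = zexpg (f x) k.
Proof. by move=> Dx; case: k => n /=; rewrite ?morphV ?groupX ?morphX. Qed.

Lemma morph_Grels alpha beta (aT rT : finGroupType) (D : {group aT})
    (f : {morphism D >-> rT}) x y :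
  x \in D -> y \in D -> Grels alpha beta x y -> Grels alpha beta (f x) (f y).
Proof.
move=> Dx Dy [Rx Ry].
by split; rewrite -morphR // -morphJ ?groupR // ?Rx ?Ry morph_zexpg.
Qed.

Section TwistedInversion.
Variable gT : finGroupType.
Implicit Types x y z : gT.

Lemma conjg_commute x y : commute x y -> x ^ y = x.
Proof. by move/commgP/conjg_fixP. Qed.

Lemma commute_commg x y z : commute z x -> commute z y -> commute z [~ x, y].
Proof.
move=> zx zy; rewrite commgEl conjgE.
by repeat apply: commuteM => //; apply: commuteV.
Qed.

Lemma commute_twisted_commg_sq x y z : commute z x -> commute z y ->
  x ^ [~ x, y] = x^-1 * z -> commute x ([~ x, y] ^+ 2).
Proof.
move=> zx zy xc; apply/commgP/conjg_fixP.
have z_fix : z ^ [~ x, y] = z by apply/conjg_commute/commute_commg.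
rewrite expg2 conjgM xc conjMg conjVg xc z_fix invMg invgK.
by rewrite -mulgA -zx mulKg.
Qed.

Lemma expg2_mul_twisted x c z : commute z x -> commute z c ->
  x ^ c = x^-1 * z -> (x * c) ^+ 2 = c ^+ 2 * z.
Proof.
move=> zx zc xc; rewrite !expg2 {1}(conjgC x c) xc -!mulgA; congr (_ * _).
by rewrite (mulgA z x c) zx -mulgA mulKg zc.
Qed.

(* x ^+ 2 = [~ x, y] ^+ 2 * z1 both commutes with [~ x, y] and is inverted by it. *)
Lemma twisted_inversion x y z1 z2 :
  commute z1 x -> commute z1 y -> commute z2 x -> commute z2 y -> z1 ^+ 2 = 1 ->
  x ^ [~ x, y] = x^-1 * z1 -> y ^ [~ y, x] = y^-1 * z2 ->
  x ^+ 2 = [~ x, y] ^+ 2 * z1 /\ x ^+ 4 = 1.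
Proof.
move=> z1x z1y z2x z2y z1_2 xc yc; set c := [~ x, y].
have z1c : commute z1 c by apply: commute_commg.
have xc2 : commute x (c ^+ 2) by apply: commute_twisted_commg_sq z1x z1y xc.
have yc2 : commute y (c ^+ 2).
  have := commute_twisted_commg_sq z2y z2x yc.
  rewrite -invgR -/c expVgn => /commuteV.
  by rewrite invgK.
have x2_y : (x ^+ 2) ^ y = c ^+ 2 * z1.
  by rewrite conjXg conjg_mulR -/c; apply: expg2_mul_twisted.
have x2E : x ^+ 2 = c ^+ 2 * z1.
  have c2z1_y : commute (c ^+ 2 * z1) y.
    by apply/commute_sym/commuteM => //; apply/commute_sym.
  by rewrite -(conjgK y (x ^+ 2)) x2_y; apply/conjg_commute/commuteV.
split=> //.
have x2_inv : (x ^+ 2) ^ c = x ^- 2.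
  rewrite conjXg xc expgMn; last by apply/commute_sym/commuteV.
  by rewrite z1_2 mulg1 expVgn.
have x2_fix : (x ^+ 2) ^ c = x ^+ 2.
  apply: conjg_commute; rewrite x2E.
  by apply/commute_sym/commuteM; [apply: commuteX | apply/commute_sym].
by rewrite (expgnA x 2 2) expg2 -{1}x2_fix x2_inv mulVg.
Qed.

Lemma inversion_Q16_relations x y :
  x ^ [~ x, y] = x^-1 -> y ^ [~ y, x] = y^-1 ->
  [/\ (x^-1 * y) ^+ 8 = 1, x ^+ 2 = (x^-1 * y) ^+ 4 & (x^-1 * y) ^ x = (x^-1 * y)^-1].
Proof.
move=> xc yc; have c1 z : commute 1 z := commute_sym (commute1 z).
have xc1 : x ^ [~ x, y] = x^-1 * 1 by rewrite mulg1.
have yc1 : y ^ [~ y, x] = y^-1 * 1 by rewrite mulg1.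
have [x2E x4] := twisted_inversion (c1 x) (c1 y) (c1 x) (c1 y) (expg1n _ _) xc1 yc1.
have [y2E _] := twisted_inversion (c1 y) (c1 x) (c1 y) (c1 x) (expg1n _ _) yc1 xc1.
rewrite mulg1 in x2E y2E.
have y2_x2 : y ^+ 2 = x ^+ 2.
  rewrite y2E -invgR expVgn -x2E; apply: (@mulgI _ (x ^+ 2)).
  by rewrite mulg1 mulgV -expgD x4.
have X2 : (x^-1 * y) ^+ 2 = [~ x, y].
  have yx : y * x^-1 = y^-1 * x.
    by apply: (@mulgI _ y); rewrite !mulgA -expg2 mulgV mul1g y2_x2 expg2 mulgK.
  by rewrite expg2 commgEl conjgE -!mulgA (mulgA y) yx -!mulgA.
have X4 : x ^+ 2 = (x^-1 * y) ^+ 4 by rewrite (expgM _ 2 2) X2 x2E.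
split=> //.
  by rewrite (expgM _ 4 2) -X4 -expgM.
rewrite conjgE invMg invgK !mulgA; congr (_ * x).
by rewrite -invMg -expg2 -y2_x2 expg2 invMg -mulgA mulVg mulg1.
Qed.

(* x ^+ a.+1 is a power of x ^+ 4, and x ^+ 4 = (x ^+ 4) ^ [~ x, y] = x ^+ (4 * a)
   forces the order of the 2-element x to divide 8. *)
Lemma twist_3mod4 x y a : (a %% 4 = 3)%N -> 2.-elt x ->
  x ^ [~ x, y] = x ^+ a -> commute (x ^+ 4) y ->
  [/\ x ^ [~ x, y] = x^-1 * x ^+ a.+1, commute (x ^+ a.+1) x,
      commute (x ^+ a.+1) y & (x ^+ a.+1) ^+ 2 = 1].
Proof.
move=> a3 x_2elt xc x4y.
have x4x : commute (x ^+ 4) x by apply/commute_sym/commuteX.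
have aS : a.+1 = (4 * (a.+1 %/ 4))%N by lia.
split.
- by rewrite expgS mulKg.
- by apply/commute_sym/commuteX.
- by rewrite aS expgM; apply/commute_sym/commuteX/commute_sym.
have x4_fix : (x ^+ 4) ^ [~ x, y] = x ^+ 4.
  by apply/conjg_commute/commute_commg.
rewrite conjXg xc -expgM in x4_fix.
have x_4a1 : x ^+ (4 * (a - 1)) = 1.
  apply: (@mulIg _ (x ^+ 4)); rewrite -expgD mul1g -x4_fix; congr (_ ^+ _); lia.
have [k ox] := p_natP x_2elt.
have ox_dvd8 : (#[x] %| 8)%N.
  have : (#[x] %| 8 * ((a - 1) %/ 2))%N.
    have -> : (8 * ((a - 1) %/ 2) = 4 * (a - 1))%N by lia.
    by rewrite order_dvdn x_4a1.
  rewrite Gauss_dvdl // ox; case: k ox => [|k] ox; first by rewrite coprime1n.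
  by rewrite coprime_pexpl // coprime2n; apply/negP => /negP; lia.
by apply/eqP; rewrite -expgM -order_dvdn; apply: dvdn_trans ox_dvd8 _; lia.
Qed.

End TwistedInversion.

Lemma quotient_gen2 (gT : finGroupType) (N : {group gT}) (x y : gT) :
  <<[set x; y]>> \subset 'N(N) -> <<[set x; y]>> / N = <<[set coset N x; coset N y]>>.
Proof.
move=> nNG; rewrite quotient_gen; last exact: subset_trans (subset_gen _) nNG.
by rewrite quotientU !quotient_set1 // (subsetP nNG) // mem_gen // !inE eqxx ?orbT.
Qed.

Section Relations3mod4.
Variables alpha beta : int.
Hypotheses (alpha3 : (alpha %% 4)%Z = 3%R) (beta3 : (beta %% 4)%Z = 3%R).

Lemma Grels_central_expg4 (gT : finGroupType) (x y : gT) : 2.-elt x -> 2.-elt y ->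
  Grels alpha beta x y -> commute (x ^+ 4) y -> commute (y ^+ 4) x ->
  x ^+ 4 = 1 /\ y ^+ 4 = 1.
Proof.
move=> x_2elt y_2elt [xc yc] x4y y4x.
have [a a3 xaE] := zexpg_3mod4 x alpha3; have [b b3 ybE] := zexpg_3mod4 y beta3.
rewrite xaE in xc; rewrite ybE in yc.
have [xc' z1x z1y z1_2] := twist_3mod4 a3 x_2elt xc x4y.
have [yc' z2y z2x z2_2] := twist_3mod4 b3 y_2elt yc y4x.
have [_ ->] := twisted_inversion z1x z1y z2x z2y z1_2 xc' yc'.
by have [_ ->] := twisted_inversion z2y z2x z1y z1x z2_2 yc' xc'.
Qed.

(* Induction on the order: modulo a central subgroup of order 2 the fourth
   powers vanish, so they are central. *)
Lemma Grels_expg4 (gT : finGroupType) (x y : gT) :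
  2.-group <<[set x; y]>> -> Grels alpha beta x y -> x ^+ 4 = 1 /\ y ^+ 4 = 1.
Proof.
move: {2}#|_| (leqnn #|<<[set x; y]>>|) => n; elim: n gT x y => [|n IHn] gT x y.
  by rewrite leqNgt cardG_gt0.
set G := <<[set x; y]>> => oG pG R.
have Gx : x \in G by rewrite mem_gen ?set21.
have Gy : y \in G by rewrite mem_gen ?set22.
have [G1 | ntG] := eqVneq G 1%G.
  by move: Gx Gy; rewrite G1 !inE => /eqP -> /eqP ->; rewrite expg1n.
have [z Zz oz] : {z | z \in 'Z(G) & #[z] = 2%N}.
  have ntZ : 'Z(G) != 1 by rewrite center_nil_eq1 // (pgroup_nil pG).
  have [pr2 dvd2 _] := pgroup_pdiv (pgroupS (center_sub G) pG) ntZ.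
  exact: Cauchy pr2 dvd2.
pose N := <[z]>%G.
have sNZ : N \subset 'Z(G) by rewrite cycle_subG.
have nNG : G \subset 'N(N) := normal_norm (sub_center_normal sNZ).
have ltNG : (#|G / N| < #|G|)%N.
  apply: ltn_quotient; last exact: subset_trans sNZ (center_sub G).
  by rewrite cycle_eq1 -order_eq1 oz.
have [x4N y4N] : coset N x ^+ 4 = 1 /\ coset N y ^+ 4 = 1.
  have GN : G / N = <<[set coset N x; coset N y]>> by apply: quotient_gen2.
  apply: IHn.
  - by rewrite -GN -ltnS; apply: leq_trans ltNG oG.
  - by rewrite -GN; apply: morphim_pgroup.
  - exact: morph_Grels (subsetP nNG x Gx) (subsetP nNG y Gy) R.
have Z4 t : t \in G -> coset N t ^+ 4 = 1 -> t ^+ 4 \in 'Z(G).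
  move=> Gt t4; apply: (subsetP sNZ); apply: coset_idr.
    by rewrite groupX // (subsetP nNG).
  by rewrite morphX // (subsetP nNG).
have /centerP[_ x4c] := Z4 x Gx x4N; have /centerP[_ y4c] := Z4 y Gy y4N.
exact: Grels_central_expg4 (mem_p_elt pG Gx) (mem_p_elt pG Gy) R (x4c y Gy) (y4c x Gx).
Qed.

Lemma Grels_Q16 (gT : finGroupType) (x y : gT) :
  2.-group <<[set x; y]>> -> Grels alpha beta x y ->
  [/\ (x^-1 * y) ^+ 8 = 1, x ^+ 2 = (x^-1 * y) ^+ 4 & (x^-1 * y) ^ x = (x^-1 * y)^-1].
Proof.
move=> pG R; have [x4 y4] := Grels_expg4 pG R; case: R => xc yc.
by apply: inversion_Q16_relations; rewrite ?xc ?yc zexpg_3mod4_inv.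
Qed.

End Relations3mod4.

Lemma order_pexpS (gT : finGroupType) (x : gT) p n : prime p ->
  x ^+ (p ^ n.+1) = 1 -> x ^+ (p ^ n) != 1 -> #[x] = (p ^ n.+1)%N.
Proof.
move=> p_pr x_pn1 x_pn; have : (#[x] %| p ^ n.+1)%N by rewrite order_dvdn x_pn1.
case/(dvdn_pfactor _ _ p_pr) => m le_m ox.
rewrite ox; congr (p ^ _)%N; apply/anti_leq; rewrite le_m ltnNge /=.
by apply: contra x_pn => le_mn; rewrite -order_dvdn ox dvdn_exp2l.
Qed.

Section QuaternionGenerators.
Variables (gT : finGroupType) (u v : gT).
Hypotheses (ou : #[u] = 8%N) (v2 : v ^+ 2 = u ^+ 4) (uv : u ^ v = u^-1).

Lemma quaternion_mulVg : u^-1 * v = v * u.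
Proof. by rewrite conjgC conjVg uv invgK. Qed.

Lemma quaternion_expg2_mulr : (v * u) ^+ 2 = v ^+ 2.
Proof. by rewrite !expg2 -mulgA (mulgA u) (conjgC u v) uv -mulgA mulVg mulg1. Qed.

Lemma quaternion_order4 w : w ^+ 2 = u ^+ 4 -> #[w] = 4%N.
Proof.
move=> w2; apply: (@order_pexpS _ _ 2 1) => //.
  by rewrite (expgM _ 2 2) w2 -expgM; apply/eqP; rewrite -order_dvdn ou.
by rewrite w2 -order_dvdn ou.
Qed.

Lemma quaternion_commg : [~ v, v * u] = u ^+ 2.
Proof.
rewrite commgEl conjgM (conjg_commute (commute_refl v)) conjgE !mulgA.
by rewrite -(mulgA v^-1) -conjgE conjVg uv invgK expg2.
Qed.

Lemma quaternion_conj_commg : v ^ [~ v, v * u] = v^-1.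
Proof.
have v4 : v ^+ 4 = 1 by rewrite -(quaternion_order4 v2) expg_order.
have vu : v ^ u = v * u ^+ 2 by rewrite conjgE mulgA quaternion_mulVg -mulgA -expg2.
rewrite quaternion_commg expg2 conjgM vu conjMg vu.
rewrite (conjg_commute (commute_sym (commuteX 2 (commute_refl u)))) -mulgA -expgD -v2.
by rewrite -expgS; apply: (@mulIg _ v); rewrite mulVg -expgSr v4.
Qed.

Lemma quaternion_Grels alpha beta :
  (alpha %% 4)%Z = 3%R -> (beta %% 4)%Z = 3%R -> Grels alpha beta v (v * u).
Proof.
move=> alpha3 beta3; have vu2 := quaternion_expg2_mulr; rewrite v2 in vu2.
have v4 : v ^+ 4 = 1 by rewrite -(quaternion_order4 v2) expg_order.
have vu4 : (v * u) ^+ 4 = 1 by rewrite -(quaternion_order4 vu2) expg_order.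
split; rewrite zexpg_3mod4_inv //; first exact: quaternion_conj_commg.
(* [~ v * u, v] = u ^- 2 fixes u and inverts v. *)
rewrite -invgR quaternion_commg conjMg.
have vV : v ^ (u ^+ 2)^-1 = v^-1.
  apply: (@conjg_inj _ (u ^+ 2)); rewrite conjgKV conjVg.
  by rewrite -quaternion_commg quaternion_conj_commg invgK.
rewrite vV (conjg_commute (commuteV (commuteX 2 (commute_refl u)))).
by apply: invg_inj; rewrite !invMg !invgK quaternion_mulVg.
Qed.

End QuaternionGenerators.

Lemma Q16_generators : exists u v : 'Q_16,
  [/\ <<[set v; v * u]>> = [set: 'Q_16], #[u] = 8%N, v ^+ 2 = u ^+ 4 & u ^ v = u^-1].
Proof.
have [[u v] gen [_ v2 uv]] := generators_quaternion (isT : 2 < 4)%N (isog_refl [set: 'Q_16]).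
have [_ _ _ defQ _] := extremal_generators_facts (isT : prime 2) gen.
case: gen => _ _ ou _; exists u, v; split=> //.
have Gv : v \in <<[set v; v * u]>> by rewrite mem_gen ?set21.
have Gu : u \in <<[set v; v * u]>>.
  by have := groupM (groupVr Gv) (mem_gen (set22 v (v * u))); rewrite mulKg.
by apply/eqP; rewrite eqEsubset subsetT /= -{1}defQ mul_subG // cycle_subG.
Qed.

Lemma nil_class_Q16 : nil_class [set: 'Q_16] = 3%N.
Proof.
have [[u v] gen _] := generators_quaternion (isT : 2 < 4)%N (isog_refl [set: 'Q_16]).
by have [_ [_ _ _ ->] _ _ _] := quaternion_structure (isT : 2 < 4)%N gen (isog_refl _).
Qed.

Lemma joing_cycles_mulVg (gT : finGroupType) (x y : gT) :
  <[x^-1 * y]> <*> <[x]> = <<[set x; y]>>.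
Proof.
have Gx : x \in <<[set x; y]>> by rewrite mem_gen ?set21.
have Gy : y \in <<[set x; y]>> by rewrite mem_gen ?set22.
have Jx : x \in <[x^-1 * y]> <*> <[x]> by rewrite (subsetP (joing_subr _ _)) ?cycle_id.
have Jxy : x^-1 * y \in <[x^-1 * y]> <*> <[x]>.
  by rewrite (subsetP (joing_subl _ _)) ?cycle_id.
apply/eqP; rewrite eqEsubset join_subG !cycle_subG Gx groupM ?groupV //= gen_subG.
apply/subsetP => g; rewrite !inE => /orP[] /eqP -> //.
by have := groupM Jx Jxy; rewrite mulKVg.
Qed.

Lemma homg_Q16 (gT : finGroupType) (H : {group gT}) (s t : gT) :
  s ^+ 8 = 1 -> t ^+ 2 = s ^+ 4 -> s ^ t = s^-1 -> <[s]> <*> <[t]> = H ->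
  H \homg [set: 'Q_16].
Proof.
move=> s8 t2 st defH; rewrite (Grp_quaternion (isT : 2 < 4)%N).
apply/existsP; exists (s, t); rewrite /= !xpair_eqE defH eqxx /=.
by apply/and3P; split; apply/eqP.
Qed.

Lemma morphim_gen2 (aT rT : finGroupType) (D : {group aT}) (f : {morphism D >-> rT})
    (x y : aT) :
  x \in D -> y \in D -> f @* <<[set x; y]>> = <<[set f x; f y]>>.
Proof.
move=> Dx Dy; have sD : [set x; y] \subset D by rewrite subUset !sub1set Dx.
by rewrite morphim_gen // morphimU !morphim_set1.
Qed.

(* The first projection maps H = <<(a1, b1), (a2, b2)>> onto <<a1, a2>>, and is
   injective as #|H| <= #|<<a1, a2>>|; its inverse followed by the second
   projection is the morphism. *)
Lemma graph_morphism (gT hT : finGroupType) (a1 a2 : gT) (b1 b2 : hT) :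
  <<[set (a1, b1); (a2, b2)]>> \homg <<[set a1; a2]>> ->
  exists f : {morphism <<[set a1; a2]>> >-> hT}, f a1 = b1 /\ f a2 = b2.
Proof.
set H := <<_>> => homH.
pose pi1 := restrm_morphism (subsetT H) (fst_morphism gT hT).
have im_pi1 : pi1 @* H = <<[set a1; a2]>>.
  by rewrite im_restrm morphim_gen2 ?inE.
have inj_pi1 : 'injm pi1.
  rewrite -card_im_injm eqn_leq leq_morphim im_pi1; exact: leq_homg homH.
have snd_invM : {in <<[set a1; a2]>> &,
    {morph (fun g => (invm inj_pi1 g).2) : g1 g2 / g1 * g2}}.
  by move=> g1 g2 Gg1 Gg2 /=; rewrite (morphM (invm_morphism inj_pi1)) // im_pi1.
exists (Morphism snd_invM) => /=.
have H1 : (a1, b1) \in H by rewrite mem_gen ?set21.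
have H2 : (a2, b2) \in H by rewrite mem_gen ?set22.
by rewrite -[a1]/(pi1 (a1, b1)) -[a2]/(pi1 (a2, b2)) !invmE.
Qed.

Lemma expg_pair (gT hT : finGroupType) (a : gT) (b : hT) n :
  ((a, b) : gT * hT) ^+ n = (a ^+ n, b ^+ n).
Proof. by elim: n => // n IHn; rewrite !expgS IHn. Qed.

Lemma Grels_Q16_morphism alpha beta (u v : 'Q_16) :
  (alpha %% 4)%Z = 3%R -> (beta %% 4)%Z = 3%R ->
  <<[set v; v * u]>> = [set: 'Q_16] -> #[u] = 8%N -> v ^+ 2 = u ^+ 4 -> u ^ v = u^-1 ->
  forall (hT : finGroupType) (x y : hT),
    2.-group <<[set x; y]>> -> Grels alpha beta x y ->
  exists f : {morphism <<[set v; v * u]>> >-> hT}, f v = x /\ f (v * u) = y.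
Proof.
move=> alpha3 beta3 genQ ou v2 uv hT x y pG R.
have [X8 x2 Xx] := Grels_Q16 alpha3 beta3 pG R.
have u8 : u ^+ 8 = 1 by apply/eqP; rewrite -order_dvdn ou.
apply: graph_morphism; rewrite genQ.
apply: (@homg_Q16 _ _ (u, x^-1 * y) (v, x)).
- by rewrite expg_pair u8 X8.
- by rewrite !expg_pair v2 x2.
- by rewrite -[_ ^ _]/(u ^ v, (x^-1 * y) ^ x) uv Xx.
have -> : (u, x^-1 * y) = (v, x)^-1 * (v * u, y).
  by rewrite -[RHS]/(v^-1 * (v * u), x^-1 * y) mulKg.
exact: joing_cycles_mulVg.
Qed.

Lemma gen2_morphisms_isom (gT hT : finGroupType) (a b : gT) (v w : hT)
    (f : {morphism <<[set v; w]>> >-> gT}) (g : {morphism <<[set a; b]>> >-> hT}) :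
  f v = a -> f w = b -> g a = v -> g b = w -> isom <<[set a; b]>> <<[set v; w]>> g.
Proof.
move=> fv fw ga gb.
have imf : f @* <<[set v; w]>> = <<[set a; b]>>.
  by rewrite morphim_gen2 ?mem_gen ?set21 ?set22 // fv fw.
have img : g @* <<[set a; b]>> = <<[set v; w]>>.
  by rewrite morphim_gen2 ?mem_gen ?set21 ?set22 // ga gb.
apply/isomP; split=> //.
by rewrite -card_im_injm eqn_leq leq_morphim /= img -{1}imf leq_morphim.
Qed.

Unset Implicit Arguments.

Theorem theorem12p1 (alpha beta : int) :
  alpha != 1%R -> beta != 1%R ->
  v2 (alpha - 1)%R = 1%N -> v2 (beta - 1)%R = 1%N ->
  (exists (gT : finGroupType) (a b : gT), is_G2 alpha beta a b) /\
  (forall (gT : finGroupType) (a b : gT), is_G2 alpha beta a b ->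
     [/\ #|<<[set a; b]>>%g| = 16%N,
         nil_class <<[set a; b]>>%g = 3%N,
         [/\ #[a]%g = 4%N, #[b]%g = 4%N & #[[~ a, b]]%g = 4%N] &
         (<<[set a; b]>>%g \isog 'Q_16)%g]).
Proof.
move=> _ _ /v2_eq1_modz4 alpha3 /v2_eq1_modz4 beta3.
have [u [v [genQ ou v2 uv]]] := Q16_generators.
have oQ : #|[set: 'Q_16]| = 16%N := card_quaternion (isT : 2 < 4)%N.
have pQ : 2.-group <<[set v; v * u]>> by rewrite genQ /pgroup oQ.
have RQ := quaternion_Grels ou v2 uv alpha3 beta3.
have univQ := Grels_Q16_morphism alpha3 beta3 genQ ou v2 uv.
split; first by exists ('Q_16)%type, v, (v * u); split.
move=> gT a b [pG R univG].
have [f [fa fb]] := univQ _ _ _ pG R.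
have [g [ga gb]] := univG _ _ _ pQ RQ.
have /isomP[inj_g im_g] := gen2_morphisms_isom fa fb ga gb.
have isoG : <<[set a; b]>> \isog [set: 'Q_16] by apply/isogP; exists g; rewrite ?im_g.
have Ga : a \in <<[set a; b]>> by rewrite mem_gen ?set21.
have Gb : b \in <<[set a; b]>> by rewrite mem_gen ?set22.
split=> //.
- by rewrite (card_isog isoG) oQ.
- by rewrite (isog_nil_class isoG) nil_class_Q16.
rewrite -(order_injm inj_g Ga) -(order_injm inj_g Gb) -(order_injm inj_g (groupR Ga Gb)).
have vu2 : (v * u) ^+ 2 = u ^+ 4 by rewrite (quaternion_expg2_mulr uv).
rewrite morphR // ga gb (quaternion_commg uv) (quaternion_order4 ou v2).
by rewrite (quaternion_order4 ou vu2) (orderXexp 1 (ou : #[u] = 2 ^ 3)%N).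
Qed.
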